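(* For $(\varphi,\xi,\theta)\in[0,\pi/2]\times[0,\pi]\times[0,\pi/2]$ let $C_\theta=\cos\theta\,(|\uparrow\rangle\langle\uparrow|+|\downarrow\rangle\langle\downarrow|)+\sin\theta\,(|\uparrow\rangle\langle\downarrow|-|\downarrow\rangle\langle\uparrow|)$ and $\gamma_{\varphi,\xi}=\cos\varphi\,|\uparrow\rangle+\sin\varphi\,e^{i\xi}|\downarrow\rangle$. Then for every coin setup $(C,\gamma)$, with $C\in U(2)$ arbitrary and $\gamma\in\mathbb{C}^2$ an arbitrary unit vector, there exists $(\varphi,\xi,\theta)\in[0,\pi/2]\times[0,\pi]\times[0,\pi/2]$ such that $(C,\gamma)\sim_d(C_\theta,\gamma_{\varphi,\xi})$. That is, the map $(\varphi,\xi,\theta)\mapsto(C_\theta,\gamma_{\varphi,\xi})$ is surjective onto the set of distributional equivalence classes of all coin setups.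
   Context: Let $\mathcal{H}=\ell^2(\mathbb{Z})\otimes\mathbb{C}^2$, with position basis $\{|j\rangle: j\in\mathbb{Z}\}$ of $\ell^2(\mathbb{Z})$ and orthonormal basis $\{|\uparrow\rangle,|\downarrow\rangle\}$ of $\mathbb{C}^2$. A (quantum) coin is any $C\in U(2)$. The conditional translation is $T=\sum_{j\in\mathbb{Z}}|j+1\rangle\langle j|\otimes|\uparrow\rangle\langle\uparrow|+\sum_{j\in\mathbb{Z}}|j-1\rangle\langle j|\otimes|\downarrow\rangle\langle\downarrow|$ and the walk operator is $W(C)=T(\mathbb{1}\otimes C)$. A coin setup is a pair $(C,\gamma)$ with $C\in U(2)$ and $\gamma\in\mathbb{C}^2$ a unit vector (the initial coin state). Its induced distributions are $p_{(C,\gamma)}(j,n)=\langle\psi_n|(|j\rangle\langle j|\otimes\mathbb{1})|\psi_n\rangle$ with $\psi_n=W(C)^n(|0\rangle\otimes\gamma)$, for $j\in\mathbb{Z}$, $n\in\mathbb{N}$. Two coin setups $\mathcal{C}_1,\mathcal{C}_2$ are distributionally equivalent, written $\mathcal{C}_1\sim_d\mathcal{C}_2$, if $p_{\mathcal{C}_1}(j,n)=p_{\mathcal{C}_2}(j,n)$ for all $j\in\mathbb{Z}$, $n\in\mathbb{N}$. *)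

From HB Require Import structures.
From mathcomp Require Import all_boot all_order all_algebra.
From mathcomp Require Import reals trigo complex.

Set Implicit Arguments.
Unset Strict Implicit.
Unset Printing Implicit Defensive.

Import Order.TTheory GRing.Theory Num.Theory.
Local Open Scope ring_scope.
Local Open Scope complex_scope.

Section QW.
Variable R : realType.
Local Notation C := R[i].

Definition up : 'I_2 := ord0.
Definition down : 'I_2 := ord_max.

(* A vector of H = l^2(Z) (x) C^2, as a function Z -> C^2
   (only finitely supported vectors arise below). *)
Definition state := int -> 'cV[C]_2.

Definition adj (A : 'M[C]_2) : 'M[C]_2 := (map_mx Num.conj A)^T.

Definition unitary2 (A : 'M[C]_2) : Prop := adj A *m A = 1%:M /\ A *m adj A = 1%:M.

Definition unit_vec (g : 'cV[C]_2) : Prop := \sum_(s < 2) `|g s 0| ^+ 2 = 1.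

(* W(C) = T (1 (x) C), where
   T = sum_j |j+1><j| (x) |up><up| + sum_j |j-1><j| (x) |down><down|:
   (W psi)(j)_up = (C psi(j-1))_up,  (W psi)(j)_down = (C psi(j+1))_down. *)
Definition walk (A : 'M[C]_2) (psi : state) : state :=
  fun j => \col_(s < 2)
    (if s == up then (A *m psi (j - 1)) s 0 else (A *m psi (j + 1)) s 0).

Definition init (g : 'cV[C]_2) : state := fun j => if j == 0 then g else 0.

Definition psi (A : 'M[C]_2) (g : 'cV[C]_2) (n : nat) : state :=
  iter n (walk A) (init g).

(* p_(C,gamma)(j,n) = <psi_n| (|j><j| (x) 1) |psi_n> = ||psi_n(j)||^2. *)
Definition prob (A : 'M[C]_2) (g : 'cV[C]_2) (j : int) (n : nat) : C :=
  \sum_(s < 2) `|psi A g n j s 0| ^+ 2.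

Definition dist_equiv (A1 : 'M[C]_2) (g1 : 'cV[C]_2)
                      (A2 : 'M[C]_2) (g2 : 'cV[C]_2) : Prop :=
  forall (j : int) (n : nat), prob A1 g1 j n = prob A2 g2 j n.

Definition Ctheta (th : R) : 'M[C]_2 :=
  \matrix_(r < 2, c < 2)
    (if r == c then (cos th)%:C
     else if (r == up) && (c == down) then (sin th)%:C
     else - (sin th)%:C).

Definition expi (x : R) : C := (cos x) +i* (sin x).

Definition gamma (ph x : R) : 'cV[C]_2 :=
  \col_(s < 2) (if s == up then (cos ph)%:C else (sin ph)%:C * expi x).

End QW.

From HB Require Import structures.
From mathcomp Require Import all_boot all_order all_algebra.
From mathcomp Require Import reals trigo complex ring lra.
Set Implicit Arguments.
Unset Strict Implicit.
Unset Printing Implicit Defensive.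

Import Order.TTheory GRing.Theory Num.Theory.
Local Open Scope complex_scope.
Local Open Scope ring_scope.

(* Two symmetries of the walk preserve every p(j,n).  Replacing the coin by
   D(u) C D(v) with unimodular diagonal D(u), D(v), and the initial state by
   k D(v)^-1 gamma with |k| = 1, multiplies psi_n(j)_s by y^n x^j k / v_s,
   where y x = u_up v_up and y / x = u_down v_down.  Conjugating both coin and
   initial state conjugates psi_n.  The first symmetry brings every unitary
   coin to C_theta with cos theta = |C_up,up|, and any initial state to
   cos phi |up> + sin phi e^{i xi} |down>; since C_theta is real, the second
   folds xi from [0, 2 pi) into [0, pi]. *)

Section CoinSetups.
Variable R : realType.
Local Notation C := R[i].

Lemma sum_ord2 (F : 'I_2 -> C) : \sum_(k < 2) F k = F up + F down.
Proof.
by rewrite !big_ord_recl big_ord0 addr0 /up /down; congr (_ + F _); apply: val_inj.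
Qed.

Lemma ord2_cases (s : 'I_2) : s = up \/ s = down.
Proof. by case: s => [[|[|m]] Hm]; [left|right|by []]; apply: val_inj. Qed.

Lemma psiS (A : 'M[C]_2) g n : psi A g n.+1 = walk A (psi A g n).
Proof. by []. Qed.

Lemma dist_equiv_trans (A1 A2 A3 : 'M[C]_2) (g1 g2 g3 : 'cV[C]_2) :
  dist_equiv A1 g1 A2 g2 -> dist_equiv A2 g2 A3 g3 -> dist_equiv A1 g1 A3 g3.
Proof. by move=> E12 E23 j n; rewrite E12 E23. Qed.

Lemma norm_expfz1 (x : C) (j : int) : `|x| = 1 -> `|x ^ j| = 1.
Proof.
move=> x1; case: j => n; first by rewrite normrX x1 expr1n.
by rewrite NegzE -exprnN normfV normrX x1 expr1n invr1.
Qed.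

Lemma unimodular_split (al be : C) : `|al| = 1 -> `|be| = 1 ->
  exists x y : C, [/\ `|x| = 1, `|y| = 1, al = y * x & be = y / x].
Proof.
move=> al1 be1.
have be0 : be != 0 by rewrite -normr_eq0 be1 oner_eq0.
pose x := sqrtc (al / be).
have x2 : x ^+ 2 = al / be by rewrite sqr_sqrtc.
have x1 : `|x| = 1.
  apply/eqP; rewrite -(@eqrXn2 _ 2) // -normrX x2 normrM normfV al1 be1.
  by rewrite invr1 !expr1n mulr1.
have x0 : x != 0 by rewrite -normr_eq0 x1 oner_eq0.
exists x, (al / x); split=> //.
- by rewrite normrM normfV al1 x1 invr1 mulr1.
- by rewrite divfK.
- by rewrite -mulrA -invfM -expr2 x2 invfM invrK mulrA mulfV ?mul1r // -normr_eq0 al1 oner_eq0.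
Qed.

Section Rescaling.
Variables (A A' : 'M[C]_2) (g g' : 'cV[C]_2) (u v : 'I_2 -> C) (k : C).
Hypothesis coin_rescaled : forall r s, A' r s = u r * A r s * v s.
Hypothesis state_rescaled : forall s, g' s 0 = k * g s 0 / v s.

Lemma psi_rescale (x y : C) : x != 0 -> (forall s, v s != 0) ->
  u up * v up = y * x -> u down * v down = y / x ->
  forall n j s, psi A' g' n j s 0 = y ^+ n * x ^ j * (k / v s) * psi A g n j s 0.
Proof.
move=> x0 v0 uv_up uv_down; elim=> [|n IH] j s.
  rewrite /psi /= /init; case: eqP => [->|_]; last by rewrite !mxE mulr0.
  by rewrite state_rescaled expr0 expr0z; field; apply: v0.
have v_up := v0 up; have v_down := v0 down.
rewrite !psiS /walk !mxE !sum_ord2 !coin_rescaled !IH.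
case: (ord2_cases s) => -> /=.
- have -> : x ^ j = x ^ (j - 1) * x by rewrite -[in RHS](expr1z x) -expfzDr // subrK.
  have -> : u up = y * x / v up by rewrite -uv_up mulfK.
  by rewrite exprS; field; rewrite v_up v_down.
- have -> : x ^ j = x ^ (j + 1) / x by rewrite expfzDr // expr1z mulfK.
  have -> : u down = y / x / v down by rewrite -uv_down mulfK.
  by rewrite exprS; field; rewrite v_up v_down x0.
Qed.

Lemma dist_equiv_rescale : (forall s, `|u s| = 1) -> (forall s, `|v s| = 1) ->
  `|k| = 1 -> dist_equiv A g A' g'.
Proof.
move=> u1 v1 k1 j n.
have v0 s : v s != 0 by rewrite -normr_eq0 v1 oner_eq0.
have [x [y [x1 y1 uv_up uv_down]]] :
    exists x y : C, [/\ `|x| = 1, `|y| = 1, u up * v up = y * x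
                     & u down * v down = y / x].
  by apply: unimodular_split; rewrite normrM u1 v1 mulr1.
have x0 : x != 0 by rewrite -normr_eq0 x1 oner_eq0.
rewrite /prob; apply: eq_bigr => s _.
rewrite (psi_rescale x0 v0 uv_up uv_down) !normrM normrX y1 norm_expfz1 //.
by rewrite normfV k1 v1 invr1 expr1n !mul1r.
Qed.

End Rescaling.

Lemma psi_conj (A : 'M[C]_2) (g : 'cV[C]_2) n j s :
  psi (map_mx Num.conj A) (map_mx Num.conj g) n j s 0 = (psi A g n j s 0)^*.
Proof.
elim: n j s => [|n IH] j s.
  by rewrite /psi /= /init; case: eqP => _; rewrite !mxE ?rmorph0.
rewrite !psiS /walk !mxE.
by case: (ord2_cases s) => -> /=; rewrite !sum_ord2 !mxE !IH rmorphD !rmorphM.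
Qed.

Lemma dist_equiv_conj (A : 'M[C]_2) (g : 'cV[C]_2) :
  dist_equiv A g (map_mx Num.conj A) (map_mx Num.conj g).
Proof.
by move=> j n; rewrite /prob; apply: eq_bigr => s _; rewrite psi_conj norm_conjC.
Qed.

(* The value at [0] is arbitrary; only its being unimodular matters. *)
Definition phase (z : C) : C := if z == 0 then 1 else z / `|z|.

Lemma norm_phase z : `|phase z| = 1.
Proof.
rewrite /phase; case: eqP => [_|/eqP z0]; first by rewrite normr1.
by rewrite normrM normfV normr_id divff // normr_eq0.
Qed.

Lemma phase_nz z : z != 0 -> phase z = z / `|z|.
Proof. by rewrite /phase => /negbTE ->. Qed.

Lemma conj_phaseM z : (phase z)^* * z = `|z|.
Proof.
rewrite /phase; case: eqP => [->|/eqP z0]; first by rewrite mulr0 normr0.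
rewrite rmorphM /= fmorphV /= conj_normC mulrAC -normCKC.
by rewrite expr2 mulfK // normr_eq0.
Qed.

Lemma norm_phaseM z : `|z| * phase z = z.
Proof.
rewrite /phase; case: eqP => [->|/eqP z0]; first by rewrite normr0 mul0r.
by rewrite mulrC divfK // normr_eq0.
Qed.

Lemma norm_real (z : C) : `|z| = (complex.Re `|z|)%:C.
Proof. by rewrite normc_def. Qed.

Lemma quarter_circle_angle (p q : R) : 0 <= p -> 0 <= q -> p ^+ 2 + q ^+ 2 = 1 ->
  exists th : R, [/\ 0 <= th <= pi / 2, cos th = p & sin th = q].
Proof.
move=> p0 q0 pq1.
have p1 : -1 <= p <= 1 by apply/andP; split; nra.
exists (acos p); split; last 2 first.
- by apply: acosK; rewrite in_itv.
- by rewrite sin_acos // -pq1 addrC addKr sqrtr_sqr ger0_norm.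
rewrite acos_ge0 //=; rewrite leNgt; apply/negP => pi2_lt.
have Np1 : -1 <= - p <= 1 by apply/andP; split; lra.
have hpi := @pi_gt0 R.
have acos_le_pi := acos_lepi p1.
have : - (pi / 2) < acos (- p) < pi / 2.
  by rewrite acosN //; apply/andP; split; lra.
by move/cos_gt0_pihalf; rewrite acosK ?in_itv //=; lra.
Qed.

Lemma norm_angle (a b : C) : `|a| ^+ 2 + `|b| ^+ 2 = 1 ->
  exists th : R, [/\ 0 <= th <= pi / 2, (cos th)%:C = `|a| & (sin th)%:C = `|b|].
Proof.
move=> ab1.
have Re_norm_ge0 (z : C) : 0 <= complex.Re `|z| by rewrite -ler0c -norm_real.
have /complexI : ((complex.Re `|a|) ^+ 2 + (complex.Re `|b|) ^+ 2)%:C = 1 :> C.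
  by rewrite rmorphD !rmorphXn -ab1; congr (_ ^+ 2 + _ ^+ 2); symmetry; apply: norm_real.
move=> {}ab1; have [th [th_range cos_th sin_th]] :=
  quarter_circle_angle (Re_norm_ge0 a) (Re_norm_ge0 b) ab1.
by exists th; rewrite cos_th sin_th -!norm_real.
Qed.

Lemma half_circle_angle (w : C) : `|w| = 1 ->
  exists xi : R, 0 <= xi <= pi /\ (expi xi = w \/ expi xi = w^*).
Proof.
case: w => p q w1.
have pq1 : p ^+ 2 + q ^+ 2 = 1.
  by apply: complexI; rewrite (add_Re2_Im2 (p +i* q)%C) w1 expr1n.
have p1 : -1 <= p <= 1 by apply/andP; split; nra.
have hcos : cos (acos p) = p by apply: acosK; rewrite in_itv.
have hsin : sin (acos p) = `|q| by rewrite sin_acos // -pq1 addrC addKr sqrtr_sqr.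
exists (acos p); split; first by rewrite acos_ge0 ?acos_lepi.
rewrite /expi hcos hsin.
by case: (lerP 0 q) => q0; [left; rewrite ger0_norm | right; rewrite ltr0_norm].
Qed.

Lemma unitary2_norms (A : 'M[C]_2) : unitary2 A ->
  [/\ `|A up up| ^+ 2 + `|A up down| ^+ 2 = 1, `|A down up| = `|A up down|,
      `|A down down| = `|A up up|
    & (A up up)^* * A up down + (A down up)^* * A down down = 0].
Proof.
case=> AA1 AA2.
have e_row := congr1 (fun M : 'M[C]_2 => M up up) AA2.
have e_col1 := congr1 (fun M : 'M[C]_2 => M up up) AA1.
have e_col2 := congr1 (fun M : 'M[C]_2 => M down down) AA1.
have e_orth := congr1 (fun M : 'M[C]_2 => M up down) AA1.
move: e_row e_col1 e_col2 e_orth; rewrite /= !mxE !sum_ord2 /adj !mxE /=.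
rewrite -!normCK -!normCKC => e_row e_col1 e_col2 e_orth.
have sq_eq (x y : C) : x ^+ 2 = y ^+ 2 -> 0 <= x -> 0 <= y -> x = y.
  by move=> xy x0 y0; apply/eqP; rewrite -(@eqrXn2 _ 2) // xy.
split=> //.
- by apply: sq_eq => //; apply: (addrI (`|A up up| ^+ 2)); rewrite e_row e_col1.
- by apply: sq_eq => //; apply: (addrI (`|A up down| ^+ 2)); rewrite e_col2 addrC e_row.

Qed.

(* With [v_down] fixed by the first row, the phase [u] of the second row is
   forced by [c] when [c != 0]; the orthogonality of the columns makes it fit
   [d] as well. *)
Lemma second_row_phase (a b c d : C) :
  `|c| = `|b| -> `|d| = `|a| -> a^* * b + c^* * d = 0 ->
  exists u : C, [/\ `|u| = 1, u * c = - `|c|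
                  & u * d * (phase a * (phase b)^*) = `|d|].
Proof.
move=> cb da orth; pose vd := phase a * (phase b)^*.
have vd1 : `|vd| = 1 by rewrite normrM norm_conjC !norm_phase mulr1.
have [->|c0] := eqVneq c 0.
  exists (phase (d * vd))^*; rewrite norm_conjC norm_phase mulr0 normr0 oppr0.
  by rewrite -mulrA conj_phaseM normrM vd1 mulr1.
exists (- (phase c)^*); rewrite normrN norm_conjC norm_phase mulNr conj_phaseM.
split=> //.
have cc0 : `|c| != 0 by rewrite normr_eq0.
have -> : - (phase c)^* * d * vd = - (c^* * d) * vd / `|c|.
  by rewrite phase_nz // rmorphM /= fmorphV /= conj_normC; field.
have -> : - (c^* * d) = a^* * b by apply/eqP; rewrite eq_sym -addr_eq0 orth.
have -> : a^* * b * vd = ((phase a)^* * a)^* * ((phase b)^* * b) by rewrite /vd rmorphM /= conjCK; ring.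
by rewrite !conj_phaseM conj_normC cb mulfK -?cb // da.
Qed.

Lemma Ctheta_rescale (A : 'M[C]_2) : unitary2 A ->
  exists (th : R) (u v : 'I_2 -> C),
    [/\ 0 <= th <= pi / 2, forall s, `|u s| = 1, forall s, `|v s| = 1
      & forall r s, Ctheta th r s = u r * A r s * v s].
Proof.
case/unitary2_norms; set a := A up up; set b := A up down.
set c := A down up; set d := A down down => ab1 cb da orth.
have [th [th_range cos_th sin_th]] := norm_angle ab1.
have [ud [ud1 ud_c ud_d]] := second_row_phase cb da orth.
pose vd := phase a * (phase b)^*.
exists th, (fun r => if r == up then (phase a)^* else ud).
exists (fun s => if s == up then 1 else vd); split=> //.
- by move=> r; case: ifP; rewrite ?norm_conjC ?norm_phase.
- by move=> s; case: ifP; rewrite ?normr1 // normrM norm_conjC !norm_phase mulr1.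
move=> r s; rewrite /Ctheta mxE.
case: (ord2_cases r) => ->; case: (ord2_cases s) => -> /=.
- by rewrite mulr1 conj_phaseM cos_th.
- have -> : (phase a)^* * b * vd = ((phase a)^* * phase a) * ((phase b)^* * b).
    by rewrite /vd; ring.
  by rewrite -normCKC norm_phase expr1n mul1r conj_phaseM sin_th.
- by rewrite mulr1 ud_c cb sin_th.
- by rewrite ud_d da cos_th.
Qed.

Lemma conj_real (x : R) : (x%:C)^* = x%:C :> C.
Proof. exact: conjc_real. Qed.

Lemma Ctheta_conj (th : R) : map_mx Num.conj (Ctheta th) = Ctheta th :> 'M[C]_2.
Proof.
by apply/matrixP => r s; rewrite !mxE; (case: ifP => _; [|case: ifP => _]); rewrite ?rmorphN /= conj_real.
Qed.

Lemma gamma_rescale (g : 'cV[C]_2) : unit_vec g ->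
  exists (ph xi : R) (k : C),
    [/\ 0 <= ph <= pi / 2, 0 <= xi <= pi, `|k| = 1
      & gamma ph xi = \col_s (k * g s 0)
        \/ gamma ph xi = map_mx Num.conj (\col_s (k * g s 0))].
Proof.
rewrite /unit_vec sum_ord2 => g1.
have [ph [ph_range cos_ph sin_ph]] := norm_angle g1.
pose k := (phase (g up 0))^*; pose w := k * g down 0.
have [xi [xi_range e_xi]] := half_circle_angle (norm_phase w).
have k1 : `|k| = 1 by rewrite norm_conjC norm_phase.
have w_norm : `|w| = `|g down 0| by rewrite normrM k1 mul1r.
exists ph, xi, k; split=> //; case: e_xi => e_xi; [left|right]; apply/matrixP => s t;
  rewrite (ord1 t) !mxE; case: (ord2_cases s) => -> /=.
- by rewrite conj_phaseM cos_ph.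
- by rewrite sin_ph e_xi -w_norm norm_phaseM.
- by rewrite conj_phaseM cos_ph conj_normC.
- by rewrite sin_ph e_xi -w_norm -conj_normC -rmorphM norm_phaseM.
Qed.

Lemma unit_vec_rescale (g : 'cV[C]_2) (v : 'I_2 -> C) :
  (forall s, `|v s| = 1) -> unit_vec g -> unit_vec (\col_s (g s 0 / v s)).
Proof.
move=> v1; rewrite /unit_vec => g1; rewrite -g1; apply: eq_bigr => s _.
by rewrite mxE normrM normfV v1 invr1 mulr1.
Qed.

End CoinSetups.

Theorem theorem3 (R : realType) (A : 'M[R[i]]_2) (g : 'cV[R[i]]_2) :
  unitary2 A -> unit_vec g ->
  exists ph x th : R,
    [/\ 0 <= ph <= pi / 2, 0 <= x <= pi, 0 <= th <= pi / 2
      & dist_equiv A g (Ctheta th) (gamma ph x)].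
Proof.
move=> A_unitary g_unit.
have [th [u [v [th_range u1 v1 A_th]]]] := Ctheta_rescale A_unitary.
pose g1 : 'cV[R[i]]_2 := \col_s (g s 0 / v s).
have [ph [xi [k [ph_range xi_range k1 gamma_g1]]]] :=
  gamma_rescale (unit_vec_rescale v1 g_unit).
have E : dist_equiv A g (Ctheta th) (\col_s (k * g1 s 0)).
  by apply: (dist_equiv_rescale (k := k) A_th) => // s; rewrite !mxE mulrA.
exists ph, xi, th; split=> //; case: gamma_g1 => ->; first exact: E.
apply: dist_equiv_trans E _; rewrite -{2}(Ctheta_conj th); exact: dist_equiv_conj.
Qed.
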